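(* Consider a connected open set $U\subset \mathrm{K}^{\circ}$. (i) For any $\omega\in \Sigma$, there is an $N\in \mathbb{N}_0$ such that $\mathcal{K}_{\omega}^N(U)$ is connected and $\mathcal{K}^N_{\omega}(U)\cap \mathbf{A}\neq \emptyset$. (ii) There are $\omega \in \Sigma, M\in \mathbb{N}_0$ such that $\mathcal{K}^M_\omega(U) \supseteq A_\alpha \cap A_\beta$ for some $\alpha, \beta \in \{1,2,3\}, \alpha\neq \beta$.
   Context: Fix a parameter $v\in(0,1/2)$. Let $\mathrm{K}^{\circ}$ denote the Kasner circle $\{(\Sigma_+,\Sigma_-)\,:\,\Sigma_+^2+\Sigma_-^2=1\}$, parametrized by the angle $\varphi$ via $(\Sigma_+,\Sigma_-)=(\cos\varphi,\sin\varphi)$. Let $A_1:=\{\Sigma_+\ge v\}\cap \mathrm{K}^{\circ}$, i.e. $\varphi\in[-\arccos v,\arccos v]$, and let $A_2,A_3$ be its images under rotation by $\pm 2\pi/3$ (namely $A_2=\{-(\Sigma_++\sqrt3\Sigma_-)/2\ge v\}$, $A_3=\{-(\Sigma_+-\sqrt3\Sigma_-)/2\ge v\}$). On $A_1$ define $\mathcal{K}_1(\varphi):=\pi-2\arctan\big(\tfrac{1+v}{1-v}\tan(\varphi/2)\big)$, and let $\mathcal{K}_2,\mathcal{K}_3$ on $A_2,A_3$ be the maps obtained from $\mathcal{K}_1$ by the same rotations. Set $\mathbf{A}:=(A_1\cap A_2)\cup(A_2\cap A_3)\cup(A_1\cap A_3)$. For $\mu\in\{1,2\},\nu\in\{2,3\},\zeta\in\{1,3\}$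 define $\mathcal{K}_{\mu\nu\zeta}:\mathrm{K}^{\circ}\to\mathrm{K}^{\circ}$ by $\mathcal{K}_{\mu\nu\zeta}(p)=\mathcal{K}_\alpha(p)$ if $p\in A_\alpha\setminus\mathbf{A}$, $=\mathcal{K}_\mu(p)$ if $p\in A_1\cap A_2$, $=\mathcal{K}_\nu(p)$ if $p\in A_2\cap A_3$, $=\mathcal{K}_\zeta(p)$ if $p\in A_1\cap A_3$. Let $\Sigma$ be the space of sequences $\omega=(\mu_n,\nu_n,\zeta_n)_{n\ge1}$ with $\mu_n\in\{1,2\},\nu_n\in\{2,3\},\zeta_n\in\{1,3\}$, and for $\omega=(\omega_n)$ set $\mathcal{K}^n_\omega:=\mathcal{K}_{\omega_n}\circ\cdots\circ\mathcal{K}_{\omega_1}$, $\mathcal{K}^0_\omega=\mathrm{Id}$. *)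

From mathcomp Require Import all_boot all_order all_algebra.
From mathcomp Require Import all_classical all_reals all_analysis.
Import Order.TTheory GRing.Theory Num.Theory.
Import numFieldNormedType.Exports.
Local Open Scope ring_scope.
Local Open Scope classical_set_scope.

Set Implicit Arguments. Unset Strict Implicit. Unset Printing Implicit Defensive.

(* The plane R^2 is modelled as R * R, points p = (Sigma_+, Sigma_-). *)

Definition Kcircle {R : realType} : set (R * R) :=
  [set p | p.1 ^+ 2 + p.2 ^+ 2 = 1].

Definition cis {R : realType} (phi : R) : R * R := (cos phi, sin phi).

Definition rot {R : realType} (t : R) (p : R * R) : R * R :=
  (cos t * p.1 - sin t * p.2, sin t * p.1 + cos t * p.2).

Definition rho {R : realType} : R * R -> R * R := rot (2 * pi / 3).
Definition rhoinv {R : realType} : R * R -> R * R := rot (- (2 * pi / 3)).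

Definition A1 {R : realType} (v : R) : set (R * R) :=
  [set p | Kcircle p /\ v <= p.1].
Definition A2 {R : realType} (v : R) : set (R * R) :=
  [set p | Kcircle p /\ v <= - (p.1 + Num.sqrt 3 * p.2) / 2].
Definition A3 {R : realType} (v : R) : set (R * R) :=
  [set p | Kcircle p /\ v <= - (p.1 - Num.sqrt 3 * p.2) / 2].

Definition Aidx {R : realType} (v : R) (a : nat) : set (R * R) :=
  match a with 1%N => A1 v | 2%N => A2 v | _ => A3 v end.

Definition Abold {R : realType} (v : R) : set (R * R) :=
  (A1 v `&` A2 v) `|` (A2 v `&` A3 v) `|` (A1 v `&` A3 v).

(* angle phi in (-pi/2, pi/2) of a point p of the circle with p.1 > 0
   (in particular of every point of A1, since v > 0) *)
Definition phiA1 {R : realType} (p : R * R) : R := atan (p.2 / p.1).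

Definition K1 {R : realType} (v : R) (p : R * R) : R * R :=
  cis (pi - 2 * atan ((1 + v) / (1 - v) * tan (phiA1 p / 2))).

(* A2 = rho^{-1}(A1), A3 = rho(A1), rho = rotation by 2pi/3;
   K2, K3 are the conjugates of K1 by these rotations *)
Definition K2 {R : realType} (v : R) (p : R * R) : R * R :=
  rhoinv (K1 v (rho p)).
Definition K3 {R : realType} (v : R) (p : R * R) : R * R :=
  rho (K1 v (rhoinv p)).

Definition Kidx {R : realType} (v : R) (a : nat) : R * R -> R * R :=
  match a with 1%N => K1 v | 2%N => K2 v | _ => K3 v end.

(* K_{mu nu zeta}; a triple t = (mu, nu, zeta).  Outside the circle
   (irrelevant) it is the identity. *)
Definition Kmix {R : realType} (v : R) (t : nat * nat * nat) (p : R * R)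
  : R * R :=
  if p \in A1 v `&` A2 v then Kidx v t.1.1 p
  else if p \in A2 v `&` A3 v then Kidx v t.1.2 p
  else if p \in A1 v `&` A3 v then Kidx v t.2 p
  else if p \in A1 v then K1 v p
  else if p \in A2 v then K2 v p
  else if p \in A3 v then K3 v p
  else p.

(* the sequence space Sigma; omega_{n} (n >= 1) is stored as omega (n-1) *)
Definition inSigma (omega : nat -> nat * nat * nat) : Prop :=
  forall n, ((omega n).1.1 = 1 \/ (omega n).1.1 = 2)%N /\
            ((omega n).1.2 = 2 \/ (omega n).1.2 = 3)%N /\
            ((omega n).2 = 1 \/ (omega n).2 = 3)%N.

Fixpoint Kiter {R : realType} (v : R) (omega : nat -> nat * nat * nat)
  (n : nat) : R * R -> R * R :=
  match n with
  | 0%N => id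
  | m.+1 => fun p => Kmix v (omega m) (Kiter v omega m p)
  end.

(* In the angle coordinate the arc A_a is centred at c_a with half-width
   alpha = acos v, and K_a acts on it as th |-> c_a + pi - G (th - c_a), where
   G th = 2 atan ((1 + v) / (1 - v) * tan (th / 2)).  The derivative of G is at
   least 1 on [-alpha, alpha] (with equality at the endpoints) and at least some
   rate > 1 on a slightly smaller interval, so images of arcs grow.
   (i) While an image of U is connected and misses the overlaps, it lies in a
   single A_a, on which the map is the continuous K_a; the image is again
   connected and contains an arc at least rate times longer.  Since arcs inside
   one A_a have length at most 2 alpha < pi, this cannot go on forever.
   (ii) Choosing at each step the branch that keeps the current arc inside one
   A_a with a definite part of it away from the endpoints, the arc grows by a
   fixed amount until it contains a whole overlap A_a `&` A_b. *)

From Pilot Require Import Defs.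
From mathcomp Require Import all_boot all_order all_algebra.
From mathcomp Require Import all_classical all_reals all_analysis.
From mathcomp Require Import ring lra.
Import Order.TTheory GRing.Theory Num.Theory.
Import numFieldNormedType.Exports.
Local Open Scope ring_scope.
Local Open Scope classical_set_scope.
Set Implicit Arguments. Unset Strict Implicit. Unset Printing Implicit Defensive.

(* [rot] alone would also denote the rotation of sequences from seq.v. *)
Local Notation rot := Defs.rot.

Section Circle.
Variable R : realType.
Implicit Types (x y t th u : R) (p q : R * R).

Lemma cos_mul3 x : cos (3 * x) = 4 * cos x ^+ 3 - 3 * cos x.
Proof.
have -> : 3 * x = x + x + x by ring.
rewrite !cosD !sinD.
transitivity (cos x ^+ 3 - 3 * cos x * sin x ^+ 2); first by ring.
by rewrite sin2cos2; ring.
Qed.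

Lemma sqr_sqrt3 : Num.sqrt (3 : R) ^+ 2 = 3.
Proof. by rewrite sqr_sqrtr // ler0n. Qed.

Lemma cos_pi3 : cos (pi / 3 : R) = 1 / 2.
Proof.
have hpi := @pi_gt0 R.
have := cos_mul3 (pi / 3); rewrite mulrC divfK ?pnatr_eq0 // cospi => h3.
have c0 : 0 < cos (pi / 3 : R) by apply: cos_gt0_pihalf; apply/andP; split; lra.
have : (cos (pi / 3 : R) + 1) * (2 * cos (pi / 3) - 1) ^+ 2 = 0 by nra.
by move/eqP; rewrite mulf_eq0 sqrf_eq0 => /orP[] /eqP; lra.
Qed.

Lemma sin_pi3 : sin (pi / 3 : R) = Num.sqrt 3 / 2.
Proof.
have hpi := @pi_gt0 R.
have s0 : 0 < sin (pi / 3 : R) by apply: sin_gt0_pi; apply/andP; split; lra.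
have := cos2Dsin2 (pi / 3 : R); rewrite cos_pi3 => h.
have q := sqr_sqrt3; have q0 : 0 < Num.sqrt (3 : R) by rewrite sqrtr_gt0 ltr0n.
have : (sin (pi / 3 : R) - Num.sqrt 3 / 2) * (sin (pi / 3) + Num.sqrt 3 / 2) = 0 by nra.
by move/eqP; rewrite mulf_eq0 => /orP[] /eqP; lra.
Qed.

Lemma cos_2pi3 : cos (2 * pi / 3 : R) = - 1 / 2.
Proof.
rewrite (_ : 2 * pi / 3 = pi / 3 + pi / 3); last by field.
by rewrite cosD cos_pi3 sin_pi3; have := sqr_sqrt3; lra.
Qed.

Lemma sin_2pi3 : sin (2 * pi / 3 : R) = Num.sqrt 3 / 2.
Proof.
rewrite (_ : 2 * pi / 3 = pi / 3 + pi / 3); last by field.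
by rewrite sinD cos_pi3 sin_pi3; lra.
Qed.

Lemma ltr_cos_0pi x y : 0 <= x <= pi -> 0 <= y <= pi -> (cos x < cos y) = (y < x).
Proof. by move=> hx hy; rewrite ltr_cos // in_itv. Qed.

Lemma ler_cos_0pi x y : 0 <= x <= pi -> 0 <= y <= pi -> (cos x <= cos y) = (y <= x).
Proof. by move=> hx hy; rewrite !leNgt ltr_cos_0pi. Qed.

Lemma Kcircle_cis th : Kcircle (cis th).
Proof. exact: cos2Dsin2. Qed.

Lemma rot_cis t th : rot t (cis th) = cis (th + t).
Proof. by rewrite /rot /cis /= cosD sinD; congr pair; ring. Qed.

Lemma rotK t p : rot t (rot (- t) p) = p.
Proof.
case: p => p1 p2; rewrite /rot /= cosN sinN.
by congr pair; rewrite -[RHS]mulr1 -(cos2Dsin2 t); ring.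
Qed.

Lemma Kcircle_rot t p : Kcircle (rot t p) <-> Kcircle p.
Proof.
have e : (rot t p).1 ^+ 2 + (rot t p).2 ^+ 2 = p.1 ^+ 2 + p.2 ^+ 2.
  by rewrite -[RHS]mulr1 -(cos2Dsin2 t) /=; ring.
change ((rot t p).1 ^+ 2 + (rot t p).2 ^+ 2 = 1 <-> p.1 ^+ 2 + p.2 ^+ 2 = 1).
by rewrite e.
Qed.

Lemma cis_add_2pi_nat th (n : nat) : cis (th + 2 * pi * n%:R) = cis th.
Proof.
elim: n => [|n IH]; first by rewrite mulr0 addr0.
rewrite -[in RHS]IH /cis (_ : th + 2 * pi * n.+1%:R = th + 2 * pi * n%:R + pi *+ 2).
  by rewrite cosD2pi sinD2pi.
by rewrite [n.+1%:R]mulrS mulr2n; ring.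
Qed.

Lemma cis_sub_2pi_nat th (n : nat) : cis (th - 2 * pi * n%:R) = cis th.
Proof. by rewrite -[in RHS](subrK (2 * pi * n%:R) th) cis_add_2pi_nat. Qed.

Lemma cis_add_2pi_int th (k : int) : cis (th + 2 * pi * k%:~R) = cis th.
Proof.
case: k => n; first by rewrite -pmulrn cis_add_2pi_nat.
by rewrite NegzE mulrNz mulrN -pmulrn cis_sub_2pi_nat.
Qed.

Lemma Kcircle_angle p : Kcircle p -> exists2 th : R, - pi <= th <= pi & p = cis th.
Proof.
case: p => p1 p2; rewrite /Kcircle /= => hp.
have hp1 : -1 <= p1 <= 1 by apply/andP; split; nra.
have hc : cos (acos p1) = p1 by rewrite acosK // in_itv.
have hs : sin (acos p1) = `|p2|.
  by rewrite sin_acos // (_ : 1 - p1 ^+ 2 = p2 ^+ 2) ?sqrtr_sqr //; lra.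
have := acos_ge0 hp1; have := acos_lepi hp1; have := @pi_gt0 R.
case: (lerP 0 p2) => h2 *.
- by exists (acos p1); [apply/andP; split; lra | rewrite /cis hc hs ger0_norm].
- exists (- acos p1); first by apply/andP; split; lra.
  by rewrite /cis cosN sinN hc hs ltr0_norm // opprK.
Qed.

Lemma Kcircle_angle_near w p : Kcircle p ->
  exists2 th : R, w - pi <= th <= w + pi & p = cis th.
Proof.
move=> /(Kcircle_rot (- w) p).2 /Kcircle_angle [u hu e].
exists (u + w); first by move: hu => /andP[? ?]; apply/andP; split; lra.
by rewrite -rot_cis -e rotK.
Qed.

Lemma cis_continuous : continuous (@cis R).
Proof.
move=> th; apply: (@cvg_pair _ _ _ _ (nbhs (cos th)) (nbhs (sin th))).
- exact: continuous_cos.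
- exact: continuous_sin.
Qed.

Lemma rot_continuous t : continuous (rot t).
Proof.
move=> p; apply: (@cvg_pair _ _ _ _ (nbhs (rot t p).1) (nbhs (rot t p).2)).
- by apply: cvgB; apply: cvgMl_tmp; [exact: cvg_fst | exact: cvg_snd].
- by apply: cvgD; apply: cvgMl_tmp; [exact: cvg_fst | exact: cvg_snd].
Qed.

Lemma exists_nat_mul_gt (d B : R) : 0 < d -> exists n : nat, B < n%:R * d.
Proof. by move=> d0; exists (Num.truncn (B / d)).+1; rewrite -ltr_pdivrMr ?truncnS_gt. Qed.

Definition arc_in (S : set (R * R)) x y := forall th, x <= th <= y -> S (cis th).

Lemma arc_in_shift S x y (k : int) :
  arc_in S x y -> arc_in S (x - 2 * pi * k%:~R) (y - 2 * pi * k%:~R).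
Proof.
move=> hS th /andP[? ?]; rewrite -(cis_add_2pi_int th k).
by apply: hS; apply/andP; split; lra.
Qed.

Lemma open_arc_in U : (exists2 V : set (R * R), open V & U = V `&` Kcircle) ->
  U !=set0 -> exists x y, x < y /\ arc_in U x y.
Proof.
move=> [V oV ->] [p [Vp hp]].
have [th0 _ ep] := Kcircle_angle hp.
have : nbhs p V by apply: open_nbhs_nbhs.
rewrite ep => /cis_continuous /nbhs_ballP [e /= e0 he].
exists (th0 - e / 2), (th0 + e / 2); split; first lra.
move=> th /andP[? ?]; split; last exact: Kcircle_cis.
by apply: he; rewrite /ball /= ltr_norml; apply/andP; split; lra.
Qed.

End Circle.

Section KasnerAngle.
Variable R : realType.
Implicit Types (c x y z th B T : R).

Definition kasner_angle c th : R := 2 * atan (c * tan (th / 2)).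

Definition kasner_slope c T : R := c * (1 + T ^+ 2) / (1 + (c * T) ^+ 2).

Lemma is_derive_kasner_angle c th : - pi < th < pi ->
  is_derive th 1 (kasner_angle c) (kasner_slope c (tan (th / 2))).
Proof.
move=> /andP[th1 th2].
have cth : cos (th / 2) != 0.
  by apply/lt0r_neq0/cos_gt0_pihalf; apply/andP; split; lra.
have dhalf : is_derive th 1 (fun x : R => x / 2) (1 / 2).
  have := is_deriveM (f := id) (g := cst (2^-1 : R)) (x := th) (v := 1)
    (is_derive_id _ _) (is_derive_cst _ _ _).
  by move/is_derive_eq; apply; rewrite /= scaler0 add0r /GRing.scale /= mulr1 div1r.
have dtan := @is_derive1_comp R tan (fun x : R => x / 2) th _ _ (is_derive_tan cth) dhalf.
have dc := @is_deriveZ R R R _ c th 1 _ dtan.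
have datan := @is_derive1_comp R atan (fun x : R => c * tan (x / 2)) th _ _
  (is_derive1_atan _) dc.
have := @is_deriveZ R R R _ 2 th 1 _ datan; rewrite /GRing.scale /= => d2.
apply: is_derive_eq; rewrite /kasner_slope cos2_tan2 //.
have : 0 < 1 + (c * tan (th / 2)) ^+ 2 by rewrite ltr_wpDr ?sqr_ge0.
by move=> /lt0r_neq0 ?; field.
Qed.

Lemma kasner_angle_continuous c th : - pi < th < pi ->
  {for th, continuous (kasner_angle c)}.
Proof.
move=> /(is_derive_kasner_angle c) [d _].
exact/differentiable_continuous/derivable1_diffP.
Qed.

Lemma reflected_kasner_angle_continuous c C th : - pi < th - C < pi ->
  {for th, continuous (fun u => pi - kasner_angle c (u - C) + C)}.
Proof.
move=> h; apply: continuousD; last exact: cvg_cst.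
apply: continuousB; first exact: cvg_cst.
apply: (@continuous_comp _ _ _ (fun u => u - C)); last exact: kasner_angle_continuous.
by apply: continuousB; [exact: cvg_id | exact: cvg_cst].
Qed.

Lemma kasner_slope_le c T (T' : R) : 1 <= c -> T ^+ 2 <= T' ^+ 2 ->
  kasner_slope c T' <= kasner_slope c T.
Proof.
move=> c1 hT; rewrite /kasner_slope.
have p1 : 0 < 1 + (c * T) ^+ 2 by rewrite ltr_wpDr ?sqr_ge0.
have p2 : 0 < 1 + (c * T') ^+ 2 by rewrite ltr_wpDr ?sqr_ge0.
rewrite ler_pdivrMr // mulrAC ler_pdivlMr // !exprMn.
have : 0 <= c * (c ^+ 2 - 1) * (T' ^+ 2 - T ^+ 2).
  by rewrite !mulr_ge0 // ?subr_ge0 //; [lra | nra].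
by move=> h; rewrite -subr_ge0; nra.
Qed.

Lemma kasner_slope_gt1 c T : 1 < c -> c * T ^+ 2 < 1 -> 1 < kasner_slope c T.
Proof.
move=> c1 hT; rewrite /kasner_slope ltr_pdivlMr ?mul1r; last first.
  by rewrite ltr_wpDr ?sqr_ge0.
rewrite -subr_gt0 (_ : _ - _ = (c - 1) * (1 - c * T ^+ 2)); last by ring.
by rewrite mulr_gt0 // subr_gt0.
Qed.

Lemma kasner_slope_eq1 c T : 0 < c -> c * T ^+ 2 = 1 -> kasner_slope c T = 1.
Proof.
move=> c0 hT; rewrite /kasner_slope (_ : (c * T) ^+ 2 = c * (c * T ^+ 2)); last by ring.
by rewrite hT mulrDr hT !mulr1 [1 + c]addrC divff // lt0r_neq0 //; lra.
Qed.

Lemma sqr_tan_le x B : B < pi / 2 -> - B <= x <= B -> tan x ^+ 2 <= tan B ^+ 2.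
Proof.
move=> hB /andP[hx1 hx2]; have hpi := @pi_gt0 R.
have ler_tan y z : y \in `](- (pi / 2)), (pi / 2)[%R -> z \in `](- (pi / 2)), (pi / 2)[%R ->
    (tan y <= tan z) = (y <= z).
  by move=> hy hz; rewrite !leNgt (ltr_tan hz hy).
have itv y : - B <= y -> y <= B -> y \in `](- (pi / 2)), (pi / 2)[%R.
  by move=> ? ?; rewrite in_itv /=; apply/andP; split; lra.
have t1 : tan x <= tan B by rewrite ler_tan; try apply: itv; lra.
have t2 : tan (- B) <= tan x by rewrite ler_tan; try apply: itv; lra.
have t0 : tan 0 <= tan B by rewrite ler_tan; try apply: itv; lra.
by rewrite tanN tan0 in t0 t2; nra.
Qed.

Lemma kasner_angle_expand c B x y : 1 <= c -> B < pi -> - B <= x -> x <= y -> y <= B ->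
  kasner_slope c (tan (B / 2)) * (y - x) <= kasner_angle c y - kasner_angle c x.
Proof.
move=> c1 hB hx xy hy.
have dG z : z \in `]x, y[%R -> is_derive z 1 (kasner_angle c) (kasner_slope c (tan (z / 2))).
  by rewrite in_itv /= => /andP[? ?]; apply: is_derive_kasner_angle; apply/andP; split; lra.
have cG : {within `[x, y], continuous (kasner_angle c)}.
  apply: continuous_in_subspaceT => z; rewrite inE /= in_itv /= => /andP[? ?].
  by apply: kasner_angle_continuous; apply/andP; split; lra.
have [z + ->] := MVT_segment xy dG cG; rewrite in_itv /= => /andP[? ?].
rewrite ler_wpM2r ?subr_ge0 // kasner_slope_le // sqr_tan_le //; first lra.
by apply/andP; split; lra.
Qed.

End KasnerAngle.

Lemma connected_sub_closedU (T : topologicalType) (S X Y : set T) :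
  closed X -> closed Y -> S `<=` X `|` Y -> S `&` X `&` Y = set0 ->
  connected S -> S `<=` X \/ S `<=` Y.
Proof.
move=> cX cY SXY SXY0 cS.
have sep : separated (S `&` X) (S `&` Y).
  have clI Z : closed Z -> closure (S `&` Z) `<=` Z.
    by move=> cZ; rewrite {2}(closure_id Z).1 //; apply: closureS => p [].
  split; rewrite -subset0 -SXY0.
  - by move=> p [/(clI _ cX) Xp [Sp Yp]].
  - by move=> p [[Sp Xp] /(clI _ cY) Yp].
have SI : S `<=` (S `&` X) `|` (S `&` Y) by move=> p Sp; case: (SXY p Sp) => ?; [left|right].
by case: (connected_subset sep SI cS) => sub; [left|right] => p /sub [].
Qed.

Section Sectors.
Context {R : realType}.
Implicit Types (th : R) (p : R * R) (a j : nat).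

Definition sector : R := 2 * pi / 3.

Definition center a : R := match a with 1 => 0 | 2 => - sector | _ => sector end.

Definition turn a : R * R -> R * R := match a with 1 => id | 2 => rho | _ => rhoinv end.

Definition unturn a : R * R -> R * R := match a with 1 => id | 2 => rhoinv | _ => rho end.

(* Counterclockwise, the arcs A1, A3, A2 are centred at 0, 2pi/3, 4pi/3. *)
Definition next_label a : nat := match a with 1 => 3 | 2 => 1 | _ => 2 end.

Fixpoint label j : nat := if j is j'.+1 then next_label (label j') else 1.

Lemma turn_cis a th : turn a (cis th) = cis (th - center a).
Proof.
case: a => [|[|[|a]]]; rewrite /= ?subr0 //; rewrite /rho /rhoinv rot_cis //.
by rewrite opprK.
Qed.

Lemma unturn_cis a th : unturn a (cis th) = cis (th + center a).
Proof. by case: a => [|[|[|a]]]; rewrite /= ?addr0 //; rewrite /rho /rhoinv rot_cis. Qed.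

Lemma Kcircle_turn a p : Kcircle (turn a p) <-> Kcircle p.
Proof. by case: a => [|[|[|a]]] //; apply: Kcircle_rot. Qed.

Lemma Kcircle_unturn a p : Kcircle (unturn a p) <-> Kcircle p.
Proof. by case: a => [|[|[|a]]] //; apply: Kcircle_rot. Qed.

Lemma turn_continuous a : continuous (turn a).
Proof. by case: a => [|[|[|a]]]; try exact: rot_continuous; move=> p; exact: cvg_id. Qed.

Lemma unturn_continuous a : continuous (unturn a).
Proof. by case: a => [|[|[|a]]]; try exact: rot_continuous; move=> p; exact: cvg_id. Qed.

Lemma label_neq j : label j.+1 != label j.
Proof. by rewrite /=; case: (label j) => [|[|[|[|a]]]]. Qed.

Lemma label_range j : (1 <= label j <= 3)%N.
Proof. by case: j => [|j] //=; case: (label j) => [|[|[|[|a]]]]. Qed.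

Lemma center_label j : exists k : nat, j%:R * sector = center (label j) + 2 * pi * k%:R.
Proof.
elim: j => [|j [k IH]]; first by exists 0%N; rewrite /= !mul0r mulr0 addr0.
have [l e] : exists l : nat, center (label j) + sector = center (label j.+1) + 2 * pi * l%:R.
  rewrite /=; case: (label j) => [|[|[|a]]];
    [exists 1%N | exists 0%N | exists 0%N | exists 1%N]; by rewrite /= /sector; field.
exists (k + l)%N; rewrite -natr1 mulrDl mul1r IH natrD.
by rewrite addrAC e; ring.
Qed.

Lemma turn_label_cis j th : turn (label j) (cis th) = cis (th - j%:R * sector).
Proof.
have [k ->] := center_label j.
by rewrite turn_cis opprD addrA cis_sub_2pi_nat.
Qed.

Lemma unturn_label_cis j th : unturn (label j) (cis th) = cis (th + j%:R * sector).
Proof.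
have [k ->] := center_label j.
by rewrite unturn_cis addrA cis_add_2pi_nat.
Qed.

Lemma rho_fst p : (rho p).1 = - (p.1 + Num.sqrt 3 * p.2) / 2.
Proof. by rewrite /rho /rot /= cos_2pi3 sin_2pi3; field. Qed.

Lemma rhoinv_fst p : (rhoinv p).1 = - (p.1 - Num.sqrt 3 * p.2) / 2.
Proof. by rewrite /rhoinv /rot /= cosN sinN cos_2pi3 sin_2pi3; field. Qed.

End Sectors.

Section KasnerMap.
Variables (R : realType) (v : R).
Hypotheses (v_gt0 : 0 < v) (v_lt1_2 : v < 1 / 2).
Implicit Types (x y th u C : R) (p : R * R) (S : set (R * R)) (a j : nat).

Definition ratio : R := (1 + v) / (1 - v).

Definition alpha : R := acos v.

Definition delta : R := alpha - pi / 3.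

(* Any margin below 2 delta works for (i); delta / 4 moreover leaves an arc of
   length 3 delta / 4 in each case of [segment_gain]. *)
Definition margin : R := delta / 4.

Definition rate : R := kasner_slope ratio (tan ((alpha - margin) / 2)).

Definition branch C th : R := pi - kasner_angle ratio (th - C) + C.

Let v_itv : - 1 <= v <= 1.
Proof. by move: v_gt0 v_lt1_2 => *; apply/andP; split; lra. Qed.

Lemma cos_alpha : cos alpha = v.
Proof. by rewrite acosK // in_itv. Qed.

Lemma alpha_0pi : 0 <= alpha <= pi.
Proof. by rewrite acos_ge0 // acos_lepi. Qed.

Lemma cos_ge_v u : - pi <= u <= pi -> v <= cos u <-> - alpha <= u <= alpha.
Proof.
move=> hu; rewrite -cos_norm -{1}cos_alpha ler_cos_0pi ?alpha_0pi ?ler_norml //.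
by rewrite hu andbT.
Qed.

Lemma angle_facts : [/\ 0 < pi :> R, pi / 3 < alpha < pi / 2,
  delta = alpha - pi / 3, margin = delta / 4 & sector = 2 * pi / 3 :> R].
Proof.
have hpi := @pi_gt0 R; move: v_gt0 v_lt1_2 => *.
split => //; apply/andP; split; rewrite -ltr_cos_0pi ?alpha_0pi ?cos_alpha;
  rewrite ?cos_pi3 ?cos_pihalf //; apply/andP; split; lra.
Qed.

Lemma ratio_gt1 : 1 < ratio.
Proof. by move: v_gt0 v_lt1_2 => *; rewrite /ratio ltr_pdivlMr ?mul1r; lra. Qed.

Lemma ratio_tan_alpha : ratio * tan (alpha / 2) ^+ 2 = 1.
Proof.
have [hpi /andP[a1 a2] _ _ _] := angle_facts; move: v_gt0 v_lt1_2 => *.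
have c0 : 0 < cos (alpha / 2) by apply: cos_gt0_pihalf; apply/andP; split; lra.
have : cos alpha = cos (alpha / 2) ^+ 2 *+ 2 - 1.
  by rewrite -cos_mulr2n mulr2n -splitr.
rewrite cos_alpha mulr2n => e.
rewrite /tan expr_div_n sin2cos2 /ratio (_ : cos (alpha / 2) ^+ 2 = (1 + v) / 2); last lra.
by field; apply/andP; split; apply: lt0r_neq0; lra.
Qed.

Lemma rate_gt1 : 1 < rate.
Proof.
have [hpi /andP[a1 a2] d m _] := angle_facts; have c1 := ratio_gt1.
apply: kasner_slope_gt1 => //; rewrite -[X in _ < X]ratio_tan_alpha ltr_pM2l; last lra.
have itv y : 0 <= y -> y < pi / 2 -> y \in `](- (pi / 2)), (pi / 2)[%R.
  by move=> *; rewrite in_itv /=; apply/andP; split; lra.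
have t0 : tan 0 <= tan ((alpha - margin) / 2).
  by rewrite !leNgt ltr_tan ?itv //; lra.
have t1 : tan ((alpha - margin) / 2) < tan (alpha / 2) by rewrite ltr_tan ?itv //; lra.
by rewrite tan0 in t0; nra.
Qed.

Lemma Aidx_turn a p : Aidx v a p <-> A1 v (turn a p).
Proof.
have hc := Kcircle_turn a p.
by case: a hc => [|[|[|a]]] [hc1 hc2]; split=> -[h1 h2];
  split; rewrite ?rho_fst ?rhoinv_fst in h2 *; auto.
Qed.

Lemma Kidx_turn a : Kidx v a = unturn a \o K1 v \o turn a.
Proof. by case: a => [|[|[|a]]]. Qed.

Lemma Kcircle_Aidx a p : Aidx v a p -> Kcircle p.
Proof. by move=> /Aidx_turn [/Kcircle_turn]. Qed.

Lemma Aidx_label_cis j th : Aidx v (label j) (cis th) <-> v <= cos (th - j%:R * sector).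
Proof.
rewrite Aidx_turn turn_label_cis.
by split => [[]|h] //; split; first exact: Kcircle_cis.
Qed.

Lemma Aidx_label_arc j th : j%:R * sector - alpha <= th <= j%:R * sector + alpha ->
  Aidx v (label j) (cis th).
Proof.
have [hpi /andP[a1 a2] _ _ _] := angle_facts.
by move=> /andP[? ?]; apply/Aidx_label_cis/cos_ge_v; apply/andP; split; lra.
Qed.

Lemma K1_cis u : - (pi / 2) < u < pi / 2 -> K1 v (cis u) = cis (pi - kasner_angle ratio u).
Proof. by move=> hu; rewrite /K1 /phiA1 /= tanK // in_itv. Qed.

Lemma Kidx_label_cis j th : - (pi / 2) < th - j%:R * sector < pi / 2 ->
  Kidx v (label j) (cis th) = cis (branch (j%:R * sector) th).
Proof. by move=> h; rewrite Kidx_turn /= turn_label_cis K1_cis // unturn_label_cis. Qed.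

Lemma Abold_Aidx a b p : (1 <= a <= 3)%N -> (1 <= b <= 3)%N -> a != b ->
  Aidx v a p -> Aidx v b p -> Abold v p.
Proof.
case: a => [|[|[|[|a]]]] //= _; case: b => [|[|[|[|b]]]] //= _ _ ha hb.
all: by [left; left; split | left; right; split | right; split].
Qed.

Definition overlap_start j : R := j.+1%:R * sector - alpha.

Lemma overlap_Aidx j th : overlap_start j <= th <= overlap_start j + 2 * delta ->
  Aidx v (label j) (cis th) /\ Aidx v (label j.+1) (cis th).
Proof.
have [hpi /andP[a1 a2] d _ s] := angle_facts.
rewrite /overlap_start -[j.+1%:R]natr1 => /andP[? ?].
by split; apply: Aidx_label_arc; rewrite -?[j.+1%:R]natr1; apply/andP; split; lra.
Qed.

Lemma overlap_Abold j th : overlap_start j <= th <= overlap_start j + 2 * delta ->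
  Abold v (cis th).
Proof.
move=> /overlap_Aidx [h h1].
by apply: (Abold_Aidx _ _ (label_neq j) h1 h); apply: label_range.
Qed.

Lemma overlap_sub_arc j p : Aidx v (label j) p -> Aidx v (label j.+1) p ->
  exists2 th, overlap_start j <= th <= overlap_start j + 2 * delta & p = cis th.
Proof.
have [hpi /andP[a1 a2] d _ s] := angle_facts.
pose m : R := j%:R * sector + pi / 3.
move=> /[dup] /Kcircle_Aidx /(Kcircle_angle_near m) [th /andP[th1 th2] ->].
move=> /Aidx_label_cis hj /Aidx_label_cis hj1.
exists th => //.
have e1 : th - j%:R * sector = (th - m) + pi / 3 by rewrite /m; ring.
have e2 : th - j.+1%:R * sector = (th - m) - pi / 3.
  by rewrite /m -[j.+1%:R]natr1 s; field.
have cos_m : cos (th - m) = cos (th - j%:R * sector) + cos (th - j.+1%:R * sector).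
  by rewrite e1 e2 [cos (_ + pi / 3)]cosD [cos (_ - pi / 3)]cosB cos_pi3; field.
have hm : `|th - m| < pi / 2.
  rewrite -ltr_cos_0pi ?cos_norm ?cos_pihalf ?normr_ge0 ?ler_norml /=; last first.
  - by apply/andP; split; lra.
  - by apply/andP; split; lra.
  - by move: v_gt0; lra.
move: hm; rewrite ltr_norml => /andP[? ?].
move: hj hj1; rewrite e1 e2 !cos_ge_v; try by apply/andP; split; lra.
move=> /andP[? ?] /andP[? ?]; have em : m = j%:R * sector + pi / 3 by [].
by rewrite /overlap_start -[j.+1%:R]natr1; apply/andP; split; lra.
Qed.

Lemma not_A123 p : A1 v p -> A2 v p -> ~ A3 v p.
Proof. by move: v_gt0 => ? [_ ?] [_ ?] [_ ?]; lra. Qed.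

Definition prefer a : nat * nat * nat :=
  match a with 1 => (1, 2, 1) | 2 => (2, 2, 1) | _ => (1, 3, 3) end%N.

Lemma Kmix_prefer a p : Aidx v a p -> Kmix v (prefer a) p = Kidx v a p.
Proof.
rewrite /Kmix (in_setI p (A1 v)) (in_setI p (A2 v)) (in_setI p (A1 v)).
have [h1|h1] := pselect (A1 v p); rewrite ?(mem_set h1) ?(memNset h1);
have [h2|h2] := pselect (A2 v p); rewrite ?(mem_set h2) ?(memNset h2);
have [h3|h3] := pselect (A3 v p); rewrite ?(mem_set h3) ?(memNset h3);
case: a => [|[|[|a]]] //= ha; exfalso; try contradiction.
all: exact: not_A123 h1 h2 h3.
Qed.

Lemma Kmix_notAbold t t' p : ~ Abold v p -> Kmix v t p = Kmix v t' p.
Proof.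
move=> hp; have n12 : ~ (A1 v `&` A2 v) p by move=> h; apply: hp; left; left.
have n23 : ~ (A2 v `&` A3 v) p by move=> h; apply: hp; left; right.
have n13 : ~ (A1 v `&` A3 v) p by move=> h; apply: hp; right.
by rewrite /Kmix (memNset n12) (memNset n23) (memNset n13).
Qed.

Lemma Kcircle_Kidx a p : Kcircle (Kidx v a p).
Proof. by rewrite Kidx_turn /=; apply/Kcircle_unturn; apply: Kcircle_cis. Qed.

Lemma Kcircle_Kmix t p : Kcircle p -> Kcircle (Kmix v t p).
Proof.
move=> hp; rewrite /Kmix.
by repeat case: ifP => _; try first
  [exact: Kcircle_Kidx | exact: (Kcircle_Kidx 1) | exact: (Kcircle_Kidx 2) | exact: (Kcircle_Kidx 3)].
Qed.

Lemma Kmix_Aidx t a p : Aidx v a p -> ~ Abold v p -> Kmix v t p = Kidx v a p.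
Proof. by move=> ha hp; rewrite (Kmix_notAbold _ (prefer a)) // Kmix_prefer. Qed.

Lemma K1_continuous_at p : 0 < p.1 -> {for p, continuous (K1 v)}.
Proof.
move=> p1; have hpi := @pi_gt0 R.
have -> : K1 v = cis \o (fun u => pi - kasner_angle ratio u) \o atan \o (fun q => q.2 / q.1)
  by [].
apply: continuous_comp.
  by apply: cvgM; [exact: cvg_snd | apply: cvgV; [exact: lt0r_neq0 | exact: cvg_fst]].
apply: continuous_comp; first exact: continuous_atan.
apply: continuous_comp; last exact: cis_continuous.
apply: continuousB; first exact: cvg_cst.
apply: kasner_angle_continuous.
by have := atan_gtNpi2 (p.2 / p.1); have := atan_ltpi2 (p.2 / p.1); move=> *; apply/andP; split; lra.
Qed.

Lemma Kidx_continuous_at a p : Aidx v a p -> {for p, continuous (Kidx v a)}.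
Proof.
move=> /Aidx_turn [_ hp]; rewrite Kidx_turn.
apply: continuous_comp; first exact: turn_continuous.
apply: continuous_comp; last exact: unturn_continuous.
by apply: K1_continuous_at; move: v_gt0; lra.
Qed.

Lemma closed_turn_halfplane a : closed [set p | v <= (turn a p).1].
Proof.
apply: (@preimage_closed _ _ (fst \o turn a) [set x | v <= x]); last exact: closed_ge.
by move=> p _; apply: continuous_comp; [exact: turn_continuous | exact: cvg_fst].
Qed.

Lemma Kcircle_cover p : Kcircle p -> [\/ A1 v p, A2 v p | A3 v p].
Proof.
move=> hp; case: (lerP v p.1) => h1; first by apply: Or31.
case: (lerP v (- (p.1 + Num.sqrt 3 * p.2) / 2)) => h2; first by apply: Or32.
case: (lerP v (- (p.1 - Num.sqrt 3 * p.2) / 2)) => h3; first by apply: Or33.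
exfalso; move: hp h1 h2 h3; rewrite /Kcircle; case: p => p1 p2 /= hp *.
have s3 := sqr_sqrt3 R.
have : 0 < (1 + p1 - Num.sqrt 3 * p2) * (1 + p1 + Num.sqrt 3 * p2).
  by apply: mulr_gt0; move: v_lt1_2; lra.
rewrite (_ : _ * _ = (1 + p1) ^+ 2 - Num.sqrt 3 ^+ 2 * p2 ^+ 2); last by ring.
by rewrite s3; move: v_lt1_2; nra.
Qed.

Lemma connected_sub_Aidx S : connected S -> S `<=` Kcircle ->
  (forall p, S p -> ~ Abold v p) -> exists a, S `<=` Aidx v a.
Proof.
move=> cS Sc nS; pose H a := [set p | v <= (turn a p).1].
have SH a p : S p -> H a p -> Aidx v a p.
  by move=> Sp hp; apply/Aidx_turn; split => //; apply/Kcircle_turn/Sc.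
have disj a b : (a != b)%N -> (1 <= a <= 3)%N -> (1 <= b <= 3)%N ->
    S `&` H a `&` H b = set0.
  move=> ab ha hb; rewrite -subset0 => p [[Sp hpa] hpb].
  exact: nS Sp (Abold_Aidx ha hb ab (SH _ _ Sp hpa) (SH _ _ Sp hpb)).
have cover : S `<=` H 1%N `|` (H 2%N `|` H 3%N).
  move=> p Sp; have hA a : Aidx v a p -> H a p by move=> /Aidx_turn [].
  case: (Kcircle_cover (Sc p Sp)) => [/(hA 1%N)|/(hA 2%N)|/(hA 3%N)] ?.
  - by left.
  - by right; left.
  - by right; right.
have d1 : S `&` H 1%N `&` (H 2%N `|` H 3%N) = set0.
  by rewrite setIUr (disj 1%N 2%N) // (disj 1%N 3%N) // setU0.
have closedH a : closed (H a) := @closed_turn_halfplane a.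
have [S1|S23] := connected_sub_closedU (closedH 1%N) (closedU (closedH 2%N) (closedH 3%N)) cover d1 cS.
  by exists 1%N => p Sp; exact: SH _ _ Sp (S1 p Sp).
have [S2|S3] := connected_sub_closedU (closedH 2%N) (closedH 3%N) S23 (disj 2%N 3%N isT isT isT) cS.
- by exists 2%N => p Sp; exact: SH _ _ Sp (S2 p Sp).
- by exists 3%N => p Sp; exact: SH _ _ Sp (S3 p Sp).
Qed.

Lemma connected_Kmix_image t S : connected S -> S `<=` Kcircle ->
  (forall p, S p -> ~ Abold v p) -> connected (Kmix v t @` S).
Proof.
move=> cS Sc nS; have [a Sa] := connected_sub_Aidx cS Sc nS.
have -> : Kmix v t @` S = Kidx v a @` S.
  by apply: eq_imagel => p Sp; apply: Kmix_Aidx; [exact: Sa | exact: nS].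
apply: connected_continuous_connected => //.
by apply: continuous_in_subspaceT => p /set_mem Sp; apply: Kidx_continuous_at; exact: Sa.
Qed.

Lemma overlap_startS j : overlap_start j.+1 = overlap_start j + sector.
Proof. by rewrite /overlap_start -[j.+2%:R]natr1; ring. Qed.

Lemma overlap_startE j : overlap_start j = j%:R * sector + sector - alpha.
Proof. by rewrite /overlap_start -[j.+1%:R]natr1; ring. Qed.

Lemma arc_in_segment S x y : arc_in S x y -> exists j x' y',
  [/\ (j <= 2)%N, overlap_start j <= x' < overlap_start j.+1, y' - x' = y - x & arc_in S x' y'].
Proof.
have [hpi _ _ _ s] := angle_facts.
have h2pi : 0 < 2 * pi :> R by rewrite mulr_gt0.
move=> hS; pose r := (x - overlap_start 0) / (2 * pi); pose k := Num.floor r.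
have k1 : k%:~R * (2 * pi) <= x - overlap_start 0 by rewrite -ler_pdivlMr ?floor_le.
have k2 : x - overlap_start 0 < (k + 1)%:~R * (2 * pi) by rewrite -ltr_pdivrMr ?floorD1_gt.
rewrite intrD in k2.
pose x' := x - 2 * pi * k%:~R; pose y' := y - 2 * pi * k%:~R.
have ex' : x' = x - 2 * pi * k%:~R by [].
have e : y' - x' = y - x by rewrite /x' /y'; ring.
have hS' : arc_in S x' y' := arc_in_shift (k := k) hS.
have o1 := overlap_startS 0; have o2 := overlap_startS 1; have o3 := overlap_startS 2.
case: (ltP x' (overlap_start 1)) => c1; first by exists 0%N, x', y'; split => //; apply/andP; split; lra.
case: (ltP x' (overlap_start 2)) => c2; first by exists 1%N, x', y'; split => //; apply/andP; split; lra.
by exists 2%N, x', y'; split => //; apply/andP; split; lra.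
Qed.

Lemma kasner_angle_gain x x' y' y : - alpha <= x -> x <= x' -> x' <= y' -> y' <= y ->
  y <= alpha -> - (alpha - margin) <= x' -> y' <= alpha - margin ->
  (y - x) + (rate - 1) * (y' - x') <= kasner_angle ratio y - kasner_angle ratio x.
Proof.
have [hpi /andP[a1 a2] d m _] := angle_facts; have c1 := ratio_gt1.
have slope1 : kasner_slope ratio (tan (alpha / 2)) = 1.
  by apply: kasner_slope_eq1; [lra | exact: ratio_tan_alpha].
have expand1 (a b : R) : - alpha <= a -> a <= b -> b <= alpha ->
    b - a <= kasner_angle ratio b - kasner_angle ratio a.
  by move=> *; rewrite -[b - a]mul1r -slope1 kasner_angle_expand //; lra.
move=> *.
have g1 : x' - x <= kasner_angle ratio x' - kasner_angle ratio x by apply: expand1; lra.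
have g2 : rate * (y' - x') <= kasner_angle ratio y' - kasner_angle ratio x'.
  by apply: kasner_angle_expand; lra.
have g3 : y - y' <= kasner_angle ratio y - kasner_angle ratio y' by apply: expand1; lra.
by rewrite mulrBl mul1r; lra.
Qed.

Lemma segment_gain_notAbold j x y : overlap_start j <= x < overlap_start j.+1 -> x <= y ->
  (forall th, x <= th <= y -> ~ Abold v (cis th)) ->
  let C := j.+1%:R * sector in
  [/\ C - alpha <= x, y <= C + alpha &
      rate * (y - x) <= kasner_angle ratio (y - C) - kasner_angle ratio (x - C)].
Proof.
have [hpi /andP[a1 a2] d m s] := angle_facts.
move=> /andP[x1 x2] xy hS C.
have o0 : overlap_start j = C - alpha by [].
have o1 : overlap_start j.+1 = C + sector - alpha by rewrite overlap_startS o0; ring.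
have hx : overlap_start j + 2 * delta < x.
  rewrite ltNge; apply/negP => hx; apply: (hS x); first by apply/andP; split; lra.
  by apply: overlap_Abold; apply/andP; split; lra.
have hy : y < overlap_start j.+1.
  rewrite ltNge; apply/negP => hy; apply: (hS (overlap_start j.+1)).
    by apply/andP; split; lra.
  by apply: overlap_Abold; apply/andP; split; lra.
split; try lra.
rewrite (_ : rate * _ = (y - C - (x - C)) + (rate - 1) * (y - C - (x - C))); last by ring.
by apply: kasner_angle_gain; lra.
Qed.

Lemma segment_gain j x y : overlap_start j <= x < overlap_start j.+1 -> x <= y ->
  y < overlap_start j.+1 + 2 * delta ->
  exists i, let C := i%:R * sector in
  [/\ C - alpha <= x, y <= C + alpha &
      (y - x) + (rate - 1) * Num.min (y - x) (3 * delta / 4)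
        <= kasner_angle ratio (y - C) - kasner_angle ratio (x - C)].
Proof.
have [hpi /andP[a1 a2] d m s] := angle_facts; have r1 := rate_gt1.
move=> /andP[x1 x2] xy hy.
have gain i x' y' : let C := i%:R * sector in C - alpha <= x -> x <= x' -> x' <= y' ->
    y' <= y -> y <= C + alpha -> C - alpha + margin <= x' -> y' <= C + alpha - margin ->
    Num.min (y - x) (3 * delta / 4) <= y' - x' ->
    [/\ C - alpha <= x, y <= C + alpha &
      (y - x) + (rate - 1) * Num.min (y - x) (3 * delta / 4)
        <= kasner_angle ratio (y - C) - kasner_angle ratio (x - C)].
  move=> C *; split => //.
  have g : y - C - (x - C) + (rate - 1) * (y' - C - (x' - C))
      <= kasner_angle ratio (y - C) - kasner_angle ratio (x - C).
    by apply: kasner_angle_gain; lra.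
  have : (rate - 1) * Num.min (y - x) (3 * delta / 4) <= (rate - 1) * (y' - x').
    by rewrite ler_wpM2l //; lra.
  have e1 : y - C - (x - C) = y - x by ring.
  have e2 : y' - C - (x' - C) = y' - x' by ring.
  by rewrite e1 e2 in g; lra.
have o0 := overlap_startE j; have o1 := overlap_startS j; rewrite o0 in x1 o1 hy.
have sS : j.+1%:R * sector = j%:R * sector + sector :> R by rewrite -natr1; ring.
case: (lerP x (overlap_start j + delta)) => hx.
- case: (lerP y (overlap_start j + 2 * delta - margin)) => hy'.
  + exists j; apply: (gain j x y); rewrite ?ge_min ?lexx //; lra.
  + exists j.+1; apply: (gain _ (overlap_start j + delta) (overlap_start j + 2 * delta - margin));
      rewrite ?sS ?ge_min; lra.
- case: (lerP y (j.+1%:R * sector + alpha - margin)) => hy'.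
  + exists j.+1; apply: (gain _ x y); rewrite ?sS ?ge_min ?lexx //; lra.
  + exists j.+1; apply: (gain _ x (j.+1%:R * sector + alpha - margin)); rewrite ?sS ?ge_min; lra.
Qed.

Lemma arc_in_branch_image S (f : R * R -> R * R) j x y :
  j%:R * sector - alpha <= x -> x <= y -> y <= j%:R * sector + alpha -> arc_in S x y ->
  (forall th, x <= th <= y -> f (cis th) = Kidx v (label j) (cis th)) ->
  arc_in (f @` S) (branch (j%:R * sector) y) (branch (j%:R * sector) x).
Proof.
have [hpi /andP[a1 a2] _ _ _] := angle_facts.
move=> hx xy hy hS hf t ht; pose C : R := j%:R * sector; have eC : C = j%:R * sector by [].
have cb : {within `[x, y], continuous (branch C)}.
  apply: continuous_in_subspaceT => z; rewrite inE /= in_itv /= => /andP[? ?].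
  by apply: reflected_kasner_angle_continuous; apply/andP; split; lra.
have mid : Num.min (branch C x) (branch C y) <= t <= Num.max (branch C x) (branch C y).
  by rewrite ge_min le_max; case/andP: ht => -> ->; rewrite orbT.
have [z] := IVT xy cb mid; rewrite in_itv /= => hz <-; exists (cis z); first exact: hS.
by rewrite hf // Kidx_label_cis //; case/andP: hz => *; apply/andP; split; lra.
Qed.

Lemma arc_step_notAbold t S x y : x <= y -> arc_in S x y ->
  (forall p, S p -> ~ Abold v p) ->
  y - x <= 2 * alpha /\
  exists x' y', arc_in (Kmix v t @` S) x' y' /\ rate * (y - x) <= y' - x'.
Proof.
move=> xy hS nS; have [j [x0 [y0 [_ hx0 e hS0]]]] := arc_in_segment hS.
have x0y0 : x0 <= y0 by lra.
have nS0 th : x0 <= th <= y0 -> ~ Abold v (cis th) by move=> /hS0; exact: nS.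
have [hC1 hC2 hg] := segment_gain_notAbold hx0 x0y0 nS0.
split; first lra.
exists (branch (j.+1%:R * sector) y0), (branch (j.+1%:R * sector) x0); split.
  apply: arc_in_branch_image hS0 _ => // th hth.
  by apply: Kmix_Aidx; [apply: Aidx_label_arc; case/andP: hth => *; apply/andP; split; lra | exact: nS0].
by rewrite /branch -e; lra.
Qed.

Lemma arc_step S x y : x <= y -> arc_in S x y ->
  (exists j, Aidx v (label j) `&` Aidx v (label j.+1) `<=` S) \/
  y - x <= 2 * alpha /\ exists a x' y', arc_in (Kmix v (prefer a) @` S) x' y' /\
    (y - x) + (rate - 1) * Num.min (y - x) (3 * delta / 4) <= y' - x'.
Proof.
move=> xy hS; have [j [x0 [y0 [_ hx0 e hS0]]]] := arc_in_segment hS.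
case: (lerP (overlap_start j.+1 + 2 * delta) y0) => hy.
  left; exists j.+1 => p [hp hp1]; have [th /andP[? ?] ->] := overlap_sub_arc hp hp1.
  by apply: hS0; case/andP: hx0 => *; apply/andP; split; lra.
have x0y0 : x0 <= y0 by lra.
right; have [i [hC1 hC2 hg]] := segment_gain hx0 x0y0 hy.
split; first lra.
exists (label i), (branch (i%:R * sector) y0), (branch (i%:R * sector) x0); split.
  apply: arc_in_branch_image hS0 _ => // th /andP[? ?].
  by apply: Kmix_prefer; apply: Aidx_label_arc; apply/andP; split; lra.
by rewrite /branch -e; lra.
Qed.

Definition update (omega : nat -> nat * nat * nat) n t : nat -> nat * nat * nat :=
  fun k => if k == n then t else omega k.

Lemma inSigma_update omega n a : inSigma omega -> inSigma (update omega n (prefer a)).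
Proof.
move=> hom k; rewrite /update; case: eqP => _; last exact: hom.
by case: a => [|[|[|a]]] /=; auto.
Qed.

Lemma Kiter_succ omega n U : Kiter v omega n.+1 @` U = Kmix v (omega n) @` (Kiter v omega n @` U).
Proof. by rewrite -image_comp. Qed.

Lemma Kiter_update omega n t U :
  Kiter v (update omega n t) n.+1 @` U = Kmix v t @` (Kiter v omega n @` U).
Proof.
have same k : (k <= n)%N -> Kiter v (update omega n t) k =1 Kiter v omega k.
  elim: k => [|k IH] // lt_kn p /=.
  by rewrite IH 1?ltnW // /update ifN // neq_ltn lt_kn.
rewrite Kiter_succ /update eqxx; congr image.
by apply: eq_imagel => p _; rewrite same.
Qed.

Lemma Kiter_meets_Abold U omega : (exists2 V : set (R * R), open V & U = V `&` Kcircle) ->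
  connected U -> U !=set0 ->
  exists N, connected (Kiter v omega N @` U) /\ Kiter v omega N @` U `&` Abold v !=set0.
Proof.
move=> hU cU U0; apply: contrapT => never; have r1 := rate_gt1.
have nS N : connected (Kiter v omega N @` U) -> forall p, (Kiter v omega N @` U) p -> ~ Abold v p.
  by move=> cN p Sp Bp; apply: never; exists N; split => //; exists p.
have Uc : U `<=` Kcircle by case: hU => V _ -> p [].
have [x0 [y0 [xy0 hU0]]] := open_arc_in hU U0.
pose d := (rate - 1) * (y0 - x0); have d0 : 0 < d by rewrite mulr_gt0 ?subr_gt0.
have nd0 n : 0 <= n%:R * d := mulr_ge0 (ler0n _ n) (ltW d0).
have grow n : [/\ connected (Kiter v omega n @` U), Kiter v omega n @` U `<=` Kcircle &
    exists x y, arc_in (Kiter v omega n @` U) x y /\ y0 - x0 + n%:R * d <= y - x].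
  elim: n => [|n [cS Sc [x [y [hS hlen]]]]].
    rewrite image_id mul0r addr0; split => //; exists x0, y0; split => //.
  have hn0 := nd0 n; have xy : x <= y by lra.
  have [_ [x' [y' [hS' hg]]]] := arc_step_notAbold (omega n) xy hS (nS n cS).
  rewrite Kiter_succ; split; first exact: connected_Kmix_image cS Sc (nS n cS).
    by move=> _ [p Sp <-]; apply/Kcircle_Kmix/Sc.
  exists x', y'; split => //; rewrite -natr1 mulrDl mul1r.
  have : d <= (rate - 1) * (y - x) by rewrite /d; apply: ler_wpM2l; lra.
  by move=> *; rewrite (_ : rate * _ = y - x + (rate - 1) * (y - x)) in hg; [lra | ring].
have [n hn] := exists_nat_mul_gt (2 * alpha) d0.
have [cS Sc [x [y [hS hlen]]]] := grow n.
have xy : x <= y by have := nd0 n; lra.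
by have [hb _] := arc_step_notAbold (omega n) xy hS (nS n cS); have := nd0 n; lra.
Qed.

Lemma Kiter_covers_overlap U : (exists2 V : set (R * R), open V & U = V `&` Kcircle) ->
  U !=set0 -> exists omega M a b, inSigma omega /\ (1 <= a <= 3)%N /\ (1 <= b <= 3)%N /\
    a <> b /\ Aidx v a `&` Aidx v b `<=` Kiter v omega M @` U.
Proof.
move=> hU U0; apply: contrapT => never; have r1 := rate_gt1.
have [hpi /andP[a1 a2] e _ _] := angle_facts.
have no_overlap omega n j : inSigma omega ->
    ~ (Aidx v (label j) `&` Aidx v (label j.+1) `<=` Kiter v omega n @` U).
  move=> hom hsub; apply: never; exists omega, n, (label j), (label j.+1).
  by do !split => //; [exact: label_range | exact: label_range | apply/eqP; rewrite eq_sym label_neq].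
have [x0 [y0 [xy0 hU0]]] := open_arc_in hU U0.
pose w := Num.min (y0 - x0) (3 * delta / 4); pose d := (rate - 1) * w.
have d0 : 0 < d by rewrite mulr_gt0 ?subr_gt0 // lt_min; apply/andP; split; lra.
have nd0 n : 0 <= n%:R * d := mulr_ge0 (ler0n _ n) (ltW d0).
have grow n : exists omega, inSigma omega /\
    exists x y, arc_in (Kiter v omega n @` U) x y /\ y0 - x0 + n%:R * d <= y - x.
  elim: n => [|n [omega [hom [x [y [hS hlen]]]]]].
    exists (fun _ => prefer 1%N); split; first by move=> k; auto.
    by exists x0, y0; rewrite image_id mul0r addr0.
  have hn0 := nd0 n; have xy : x <= y by lra.
  have [[j hj]|[_ [a [x' [y' [hS' hg]]]]]] := arc_step xy hS.
    by case: (no_overlap _ _ _ hom hj).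
  exists (update omega n (prefer a)); split; first exact: inSigma_update.
  exists x', y'; rewrite Kiter_update; split => //.
  have : d <= (rate - 1) * Num.min (y - x) (3 * delta / 4).
    rewrite /d; apply: ler_wpM2l; first lra.
    by rewrite /w le_min !ge_min lexx orbT andbT; lra.
  by move=> dle; rewrite -natr1 mulrDl mul1r; lra.
have [n hn] := exists_nat_mul_gt (2 * alpha) d0.
have [omega [hom [x [y [hS hlen]]]]] := grow n.
have xy : x <= y by have := nd0 n; lra.
have [[j hj]|[hb _]] := arc_step xy hS; first by case: (no_overlap _ _ _ hom hj).
by have := nd0 n; lra.
Qed.

End KasnerMap.

Theorem lemma1 (R : realType) (v : R) (U : set (R * R)) :
  0 < v -> v < 1 / 2 ->
  (exists2 V : set (R * R), @open (R * R)%type V & U = V `&` Kcircle) ->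
  @connected (R * R)%type U -> U !=set0 ->
  (forall omega, inSigma omega ->
     exists N : nat, @connected (R * R)%type (Kiter v omega N @` U) /\
                     (Kiter v omega N @` U) `&` Abold v !=set0) /\
  (exists omega, exists M : nat, exists a b : nat,
     inSigma omega /\ (1 <= a <= 3)%N /\ (1 <= b <= 3)%N /\ a <> b /\
     Aidx v a `&` Aidx v b `<=` Kiter v omega M @` U).
Proof.
move=> v0 v1 hU cU U0; split.
- by move=> omega _; exact: Kiter_meets_Abold.
- exact: Kiter_covers_overlap.
Qed.
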